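(* Let $(p_n)_{n\ge1}$ be the strictly increasing enumeration of all primes and let $S=\big\langle \frac{p_n+1}{p_n^2}: n\in\mathbb N\big\rangle\subseteq\mathbb Q_{\ge0}$. Then $\mathcal A(S)=\{\frac{p_n+1}{p_n^2}: n\in\mathbb N\}$, every element of $S$ is divisible in $S$ by only finitely many atoms, and $S$ is an FFM.
   Context: Monoids are commutative, cancellative, with identity, written additively; $a\mid_S b$ means $b-a\in S$. $\mathcal A(S)$ is the set of atoms. An FFM is a monoid in which every element is a finite sum of atoms and has only finitely many factorizations (up to order). *)

From mathcomp Require Import all_boot all_order all_algebra.
Set Implicit Arguments. Unset Strict Implicit. Unset Printing Implicit Defensive.
Import Order.TTheory GRing.Theory Num.Theory.
Local Open Scope ring_scope.

Definition gen (p : nat) : rat := (p + 1)%N%:R / (p ^ 2)%N%:R.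

Definition inS (x : rat) : Prop :=
  exists s : seq nat, all prime s /\ x = \sum_(p <- s) gen p.

Definition unitS (u : rat) : Prop := inS u /\ inS (- u).

Definition divS (a b : rat) : Prop := inS (b - a).

Definition atomS (a : rat) : Prop :=
  inS a /\ ~ unitS a /\
  forall b c, inS b -> inS c -> a = b + c -> unitS b \/ unitS c.

Definition factorization (x : rat) (f : seq rat) : Prop :=
  (forall a, a \in f -> atomS a) /\ x = \sum_(a <- f) a.

Definition FFM_S : Prop :=
  forall x, inS x ->
    (exists f, factorization x f) /\
    (exists L : seq (seq rat), forall f, factorization x f ->
        exists2 g, g \in L & perm_eq f g).

From mathcomp Require Import all_boot all_order all_algebra.
From mathcomp Require Import ring zify.
Import Order.TTheory GRing.Theory Num.Theory.
Set Implicit Arguments. Unset Strict Implicit.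
Local Open Scope ring_scope.

(* After clearing denominators, (p+1)/p^2 is the only generator with p in its
   denominator, and p+1 is prime to p.  Hence if a sum of generators over the
   primes s equals a sum over u and p does not occur in s, then p^2 divides the
   multiplicity of p in u.  Taking s = [:: p] shows that (p+1)/p^2 is not a sum
   of two or more generators.  If (p+1)/p^2 divides x = sum_(q in s) (q+1)/q^2
   and p is not in s, then p^2 copies of (p+1)/p^2 fit in x, so
   p + 1 <= x <= size s: only finitely many atoms divide x.  These atoms are
   bounded below, which bounds the length of the factorizations of x. *)

Local Notation gsum s := (\sum_(q <- s) gen q).

Lemma gen_mul_sqr p : (0 < p)%N -> gen p * (p ^ 2)%N%:R = (p + 1)%N%:R.
Proof.
by move=> p_gt0; rewrite /gen mulfVK // pnatr_eq0 expn_eq0 negb_and -lt0n p_gt0.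
Qed.

Lemma gen_gt0 p : (0 < p)%N -> 0 < gen p.
Proof.
by move=> p_gt0; rewrite /gen divr_gt0 // ltr0n ?addn1 ?expn_gt0 ?p_gt0.
Qed.

Lemma gen_le1 p : (1 < p)%N -> gen p <= 1.
Proof.
move=> p_gt1; rewrite /gen ler_pdivrMr ?ltr0n ?expn_gt0 ?(ltnW p_gt1) //.
rewrite mul1r ler_nat; nia.
Qed.

Lemma gen_mul_ge1 p B : (0 < p)%N -> (p <= B)%N -> 1 <= gen p * B%:R.
Proof.
move=> p_gt0 le_pB; rewrite /gen mulrAC ler_pdivlMr ?ltr0n ?expn_gt0 ?p_gt0 //.
rewrite mul1r -natrM ler_nat; nia.
Qed.

Lemma gsum_ge0 s : 0 <= gsum s.
Proof. by apply: sumr_ge0 => q _; rewrite /gen divr_ge0 ?ler0n. Qed.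

Lemma gsum_gt0 s : all prime s -> s != [::] -> 0 < gsum s.
Proof.
case: s => [|q s] //= /andP[q_pr _] _.
by rewrite big_cons ltr_wpDr ?gsum_ge0 ?gen_gt0 ?prime_gt0.
Qed.

Lemma gsum_le_size s : all prime s -> gsum s <= (size s)%:R.
Proof.
elim: s => [|q s IHs] /=; first by rewrite big_nil.
case/andP=> q_pr s_pr; rewrite big_cons -addn1 natrD addrC.
by rewrite lerD ?IHs ?gen_le1 ?prime_gt1.
Qed.

Lemma gsum_count p u :
  gsum u = (count_mem p u)%:R * gen p + gsum (filter (predC1 p) u).
Proof.
elim: u => [|q u IHu] /=; first by rewrite !big_nil mul0r addr0.
rewrite big_cons IHu; case: (eqVneq q p) => [->|_] /=.
  by rewrite natrD mulrDl mul1r addrA.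
by rewrite add0n big_cons addrCA.
Qed.

Definition sqprod (s : seq nat) : nat := \prod_(q <- s) q ^ 2.

Lemma gsum_sqprod_nat s : all prime s ->
  exists N : nat, gsum s * (sqprod s)%:R = N%:R.
Proof.
rewrite /sqprod; elim: s => [|q s IHs] /=.
  by exists 0%N; rewrite big_nil mul0r.
case/andP=> q_pr /IHs[N eqN].
exists ((q + 1) * (\prod_(j <- s) j ^ 2) + q ^ 2 * N)%N.
rewrite !big_cons natrD !natrM mulrDl -eqN -(gen_mul_sqr (prime_gt0 q_pr)) !natrM.
ring.
Qed.

Lemma prime_dvd_sqprod p s : prime p -> all prime s ->
  (p %| sqprod s)%N = (p \in s).
Proof.
move=> p_pr; rewrite /sqprod; elim: s => [|q s IHs] /=.
  by rewrite big_nil dvdn1; case: p p_pr => [|[]].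
case/andP=> q_pr /IHs IH; rewrite big_cons Euclid_dvdM // Euclid_dvdX //.
by rewrite dvdn_prime2 // andbT IH in_cons.
Qed.

Lemma sqr_dvd_count_gsum p s u : prime p -> all prime s -> all prime u ->
  p \notin s -> gsum s = gsum u -> (p ^ 2 %| count_mem p u)%N.
Proof.
move=> p_pr s_pr u_pr p_s eq_su.
set v := filter (predC1 p) u; set k := count_mem p u.
have v_pr : all prime v.
  by apply/allP => q; rewrite mem_filter => /andP[_ /(allP u_pr)].
have p_v : p \notin v by rewrite mem_filter /= eqxx.
have [[M eqM] [N eqN]] := (gsum_sqprod_nat s_pr, gsum_sqprod_nat v_pr).
have eq_nat : (M * (sqprod v * p ^ 2) =
               k * (p + 1) * (sqprod s * sqprod v) + N * (sqprod s * p ^ 2))%N.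
  apply/eqP; rewrite -(eqr_nat rat) natrD !natrM -eqM -eqN.
  rewrite -(gen_mul_sqr (prime_gt0 p_pr)) eq_su (gsum_count p u) -/v -/k.
  apply/eqP; ring.
have : (p ^ 2 %| k * (p + 1) * (sqprod s * sqprod v))%N.
  have dvd_N : (p ^ 2 %| N * (sqprod s * p ^ 2))%N by rewrite mulnA dvdn_mull.
  by rewrite -(dvdn_addl _ dvd_N) -eq_nat mulnA dvdn_mull.
rewrite -mulnA mulnC Gauss_dvdr //; apply: coprimeXl.
rewrite !coprimeMr !prime_coprime // !prime_dvd_sqprod //.
rewrite (negbTE p_s) (negbTE p_v).
by rewrite !andbT dvdn_addr ?dvdnn // dvdn1 neq_ltn prime_gt1 ?orbT.
Qed.

Lemma gen_neq_gsum p t : prime p -> all prime t -> (1 < size t)%N ->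
  gen p != gsum t.
Proof.
move=> p_pr t_pr t_gt1; apply/eqP => eq_pt.
have [p_t|p_t] := boolP (p \in t).
  have rem_pr : all prime (rem p t) by apply/allP => q /mem_rem /(allP t_pr).
  have : rem p t != [::].
    by rewrite -size_eq0 size_rem //; case: (size t) t_gt1 => [|[]].
  move/(gsum_gt0 rem_pr); move: eq_pt.
  rewrite (big_rem _ p_t) /= -{1}[gen p]addr0.
  by move/addrI <-; rewrite ltxx.
have := @sqr_dvd_count_gsum p t [:: p] p_pr t_pr; rewrite /= p_pr eqxx big_seq1.
move/(_ isT p_t (esym eq_pt)); rewrite dvdn1; have := prime_gt1 p_pr; nia.
Qed.

Lemma inS_ge0 x : inS x -> 0 <= x.
Proof. by case=> s [_ ->]; apply: gsum_ge0. Qed.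

Lemma inS0 : inS 0.
Proof. by exists [::]; rewrite big_nil. Qed.

Lemma inSD x y : inS x -> inS y -> inS (x + y).
Proof.
case=> [s [s_pr ->]] [t [t_pr ->]].
by exists (s ++ t); rewrite all_cat s_pr t_pr big_cat.
Qed.

Lemma unitSE u : unitS u <-> u = 0.
Proof.
split=> [[/inS_ge0 u_ge0 /inS_ge0]|->].
  by rewrite oppr_ge0 => u_le0; apply/eqP; rewrite eq_le u_le0 u_ge0.
by split; rewrite ?oppr0; apply: inS0.
Qed.

Lemma atomS_gen a : atomS a <-> exists p : nat, prime p /\ a = gen p.
Proof.
split=> [[[s [s_pr ->]] [not_unit indec]] | [p [p_pr ->]]].
  case: s s_pr not_unit indec => [|q [|q' t]] /=.
  - by move=> _ []; apply/unitSE; rewrite big_nil.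
  - by rewrite andbT big_seq1 => q_pr; exists q.
  case/andP=> q_pr t_pr _ /(_ (gen q) (gsum (q' :: t))).
  have q_S : inS (gen q) by exists [:: q]; rewrite big_seq1 /= q_pr.
  have t_S : inS (gsum (q' :: t)) by exists (q' :: t).
  case/(_ q_S t_S (big_cons _ _ _ _ _ _)) => /unitSE/eqP.
    by rewrite gt_eqF ?gen_gt0 ?prime_gt0.
  by rewrite gt_eqF ?gsum_gt0.
split; first by exists [:: p]; rewrite big_seq1 /= p_pr.
split; first by move/unitSE/eqP; rewrite gt_eqF ?gen_gt0 ?prime_gt0.
move=> _ _ [s [s_pr ->]] [t [t_pr ->]] eq_pst.
case: s s_pr eq_pst => [|q s] s_pr eq_pst.
  by left; apply/unitSE; rewrite big_nil.
case: t t_pr eq_pst => [|r t] t_pr eq_pst.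
  by right; apply/unitSE; rewrite big_nil.
have u_pr : all prime ((q :: s) ++ r :: t) by rewrite all_cat s_pr t_pr.
have u_gt1 : (1 < size ((q :: s) ++ r :: t))%N by rewrite size_cat /= addnS.
by move: (gen_neq_gsum p_pr u_pr u_gt1); rewrite big_cat {1}eq_pst eqxx.
Qed.

Lemma divS_gen_gsum p s : prime p -> all prime s -> divS (gen p) (gsum s) ->
  (p \in s) || (p < size s)%N.
Proof.
move=> p_pr s_pr [t [t_pr eq_t]]; have [p_s|p_s] /= := boolP (p \in s) => //.
have pt_pr : all prime (p :: t) by rewrite /= p_pr.
have eq_s : gsum s = gsum (p :: t) by rewrite big_cons -eq_t addrC subrK.
set k := count_mem p (p :: t).
have k_ge : (p ^ 2 <= k)%N.
  by apply: dvdn_leq; [rewrite /k /= eqxx | exact: sqr_dvd_count_gsum eq_s].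
have : (p + 1)%N%:R <= gsum s.
  rewrite eq_s (gsum_count p) -/k -[leLHS]addr0 lerD ?gsum_ge0 //.
  rewrite -(gen_mul_sqr (prime_gt0 p_pr)) mulrC ler_wpM2r ?ler_nat //.
  by rewrite ltW ?gen_gt0 ?prime_gt0.
move=> le_p1; have := le_trans le_p1 (gsum_le_size s_pr); rewrite ler_nat; lia.
Qed.

Definition atom_primes (s : seq nat) : seq nat := s ++ iota 0 (size s).

Lemma atomS_divS_gsum a s : all prime s -> atomS a -> divS a (gsum s) ->
  exists p, [/\ prime p, p \in atom_primes s & a = gen p].
Proof.
move=> s_pr /atomS_gen[p [p_pr ->]] /(divS_gen_gsum p_pr s_pr) p_s.
by exists p; rewrite mem_cat mem_iota.
Qed.

Lemma inS_sum_atoms f : (forall a, a \in f -> atomS a) -> inS (\sum_(a <- f) a).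
Proof.
elim: f => [|a f IHf] f_at; first by rewrite big_nil; exact: inS0.
rewrite big_cons; apply: inSD; first by case: (f_at a (mem_head _ _)).
by apply: IHf => b b_f; apply: f_at; rewrite inE b_f orbT.
Qed.

Lemma factorization_divS x f a : factorization x f -> a \in f -> divS a x.
Proof.
case=> f_at -> a_f; rewrite /divS (big_rem _ a_f) addrC addKr.
by apply: inS_sum_atoms => b /mem_rem; exact: f_at.
Qed.

Lemma factorization_map_gen s : all prime s -> factorization (gsum s) (map gen s).
Proof.
move=> s_pr; split; last by rewrite big_map.
by move=> _ /mapP[p p_s ->]; apply/atomS_gen; exists p; rewrite (allP s_pr).
Qed.

Lemma factorization_gsum_atom_primes s f a : all prime s ->
  factorization (gsum s) f -> a \in f ->
  exists p, [/\ prime p, p \in atom_primes s & a = gen p].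
Proof.
move=> s_pr f_fact a_f.
exact: atomS_divS_gsum s_pr (f_fact.1 a a_f) (factorization_divS f_fact a_f).
Qed.

Lemma size_le_sum_mulr (R : numDomainType) (f : seq R) (c : R) :
  (forall a, a \in f -> 1 <= a * c) -> (size f)%:R <= (\sum_(a <- f) a) * c.
Proof.
elim: f => [|a f IHf] f_ge /=; first by rewrite big_nil mul0r.
rewrite big_cons mulrDl -addn1 natrD addrC lerD ?f_ge ?mem_head //.
by apply: IHf => b b_f; apply: f_ge; rewrite inE b_f orbT.
Qed.

Lemma size_factorization_gsum s f : all prime s -> factorization (gsum s) f ->
  (size f <= size s * \max_(p <- atom_primes s) p)%N.
Proof.
move=> s_pr f_fact; set B := \max_(p <- atom_primes s) p.
have f_ge a : a \in f -> 1 <= a * B%:R.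
  case/(factorization_gsum_atom_primes s_pr f_fact) => p [p_pr p_at ->].
  by apply: gen_mul_ge1 (prime_gt0 p_pr) _; exact: leq_bigmax_seq.
rewrite -(ler_nat rat) natrM; apply: le_trans (size_le_sum_mulr f_ge) _.
by rewrite -f_fact.2 ler_wpM2r ?ler0n ?gsum_le_size.
Qed.

Lemma bounded_seqs_enum (T : eqType) (L : seq T) n :
  exists E : seq (seq T), forall f, all (mem L) f -> (size f <= n)%N -> f \in E.
Proof.
elim: n => [|n [E E_f]]; first by exists [:: [::]] => [[]].
exists ([::] :: [seq a :: g | a <- L, g <- E]) => [[|a f]] /=.
  by rewrite inE.
case/andP=> a_L f_L f_n; rewrite inE; apply/orP; right.
by apply/allpairsP; exists (a, f); rewrite /= a_L E_f.
Qed.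

Theorem mainTheorem9 :
  (forall a : rat, atomS a <-> exists p : nat, prime p /\ a = gen p) /\
  (forall x : rat, inS x ->
     exists L : seq rat, forall a, atomS a -> divS a x -> a \in L) /\
  FFM_S.
Proof.
split; first exact: atomS_gen.
split=> [_ [s [s_pr ->]] | _ [s [s_pr ->]]].
  exists (map gen (atom_primes s)) => a a_at.
  by case/(atomS_divS_gsum s_pr a_at) => p [_ p_at ->]; exact: map_f.
split; first by exists (map gen s); exact: factorization_map_gen.
have [E E_f] := bounded_seqs_enum (map gen (atom_primes s))
                                  (size s * \max_(p <- atom_primes s) p).
exists E => f f_fact; exists f; last exact: perm_refl.
apply: E_f; last exact: size_factorization_gsum.
apply/allP => a /(factorization_gsum_atom_primes s_pr f_fact)[p [_ p_at ->]].
exact: map_f.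
Qed.
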